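(* Let $L$ be a differential graded Lie algebra with differential $\delta$ (degree $-1$) and bracket $[\cdot,\cdot]$ (degree $0$), and let $D$ be the operator equal to $\delta$ on $L_1$ and zero on $L_i$, $i\ne1$. Fix $n$ and homogeneous elements $a_0,\dots,a_n\in L$. For $j,k\ge0$ with $j+k<n$ define $$Z_{n,j,k}=\sum_{\pi\in S_{n+1}}(-1)^{\varepsilon+|a_{\pi_1}|+\dots+|a_{\pi_j}|}\,\Big[\dots\Big[\big[\dots[Da_{\pi_0},a_{\pi_1}],\dots,a_{\pi_j}\big],\big[\dots[Da_{\pi_{j+1}},a_{\pi_{j+2}}],\dots,a_{\pi_{j+k+1}}\big]\Big],a_{\pi_{j+k+2}}\Big],\dots,a_{\pi_n}\Big],$$ i.e. the left-nested bracket of $Da_{\pi_0}$ with $a_{\pi_1},\dots,a_{\pi_j}$ is bracketed with the left-nested bracket of $Da_{\pi_{j+1}}$ with $a_{\pi_{j+2}},\dots,a_{\pi_{j+k+1}}$, and the result is then successively bracketed on the right with $a_{\pi_{j+k+2}},\dots,a_{\pi_n}$; here $(-1)^\varepsilon$ is the Koszul sign of the action of $\pi$ on $a_0\otimes\dots\otimes a_n$. Then $Z_{n,j,k}=Z_{n,k,j}$, and if $j+k+1<n$, then $Z_{n,j,k}=Z_{n,j+1,k}+Z_{n,j,k+1}$.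
   Context: A differential graded Lie algebra: $\mathbb{Z}$-graded vector space $L=\bigoplus_iL_i$ with graded antisymmetric bracket of degree $0$ satisfying the graded Jacobi identity and a square-zero derivation $\delta:L_i\to L_{i-1}$. *)

From HB Require Import structures.
From mathcomp Require Import all_boot all_order all_algebra all_fingroup.
Set Implicit Arguments. Unset Strict Implicit. Unset Printing Implicit Defensive.
Import Order.TTheory GRing.Theory Num.Theory.
Local Open Scope ring_scope.

Definition sgnz {K : fieldType} (z : int) : K := (-1) ^ z.

Definition is_dgla (K : fieldType) (L : lmodType K)
  (Lg : int -> {pred L}) (br : L -> L -> L) (delta : L -> L) : Prop :=
  (forall i, 0 \in Lg i) /\
  (forall i (c : K) x y, x \in Lg i -> y \in Lg i -> c *: x + y \in Lg i) /\
  (forall x : L, exists (s : seq int) (f : int -> L),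
      uniq s /\ (forall i, f i \in Lg i) /\ x = \sum_(i <- s) f i) /\
  (forall (s : seq int) (f : int -> L), uniq s -> (forall i, f i \in Lg i) ->
      \sum_(i <- s) f i = 0 -> forall i, i \in s -> f i = 0) /\
  (forall (c : K) x y z, br (c *: x + y) z = c *: br x z + br y z) /\
  (forall (c : K) x y z, br z (c *: x + y) = c *: br z x + br z y) /\
  (forall i j x y, x \in Lg i -> y \in Lg j -> br x y \in Lg (i + j)) /\
  (forall i j x y, x \in Lg i -> y \in Lg j ->
      br x y = - (sgnz (i * j) *: br y x)) /\
  (forall i j x y z, x \in Lg i -> y \in Lg j ->
      br x (br y z) = br (br x y) z + sgnz (i * j) *: br y (br x z)) /\
  (forall (c : K) x y, delta (c *: x + y) = c *: delta x + delta y) /\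
  (forall i x, x \in Lg i -> delta x \in Lg (i - 1)) /\
  (forall x, delta (delta x) = 0) /\
  (forall i x y, x \in Lg i ->
      delta (br x y) = br (delta x) y + sgnz i *: br x (delta y)).

Definition Dop (K : fieldType) (L : lmodType K) (delta : L -> L)
  (x : L) (dx : int) : L := if dx == 1 then delta x else 0.

Definition lnest (L : Type) (br : L -> L -> L) (x : L) (s : seq L) : L :=
  foldl br x s.

Definition koszul_exp (n : nat) (d : 'I_n.+1 -> int) (pi : 'S_n.+1) : int :=
  \sum_(p : 'I_n.+1) \sum_(q : 'I_n.+1 | (p < q)%N && (pi q < pi p)%N)
     d (pi p) * d (pi q).

Definition Zjk (K : fieldType) (L : lmodType K) (br : L -> L -> L)
  (delta : L -> L) (n : nat) (a : 'I_n.+1 -> L) (d : 'I_n.+1 -> int)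
  (j k : nat) : L :=
  \sum_(pi : 'S_n.+1)
    let b (p : nat) := a (pi (inord p)) in
    let db (p : nat) := d (pi (inord p)) in
    sgnz (koszul_exp d pi + \sum_(1 <= p < j.+1) db p) *:
      lnest br
        (br (lnest br (Dop delta (b 0%N) (db 0%N)) (map b (iota 1 j)))
            (lnest br (Dop delta (b j.+1) (db j.+1)) (map b (iota j.+2 k))))
        (map b (iota (j + k).+2 (n - (j + k).+1))).

From HB Require Import structures.
From mathcomp Require Import all_boot all_order all_algebra all_fingroup.
From mathcomp Require Import zify ring.
Import Order.TTheory GRing.Theory Num.Theory.
Local Open Scope ring_scope.
Set Implicit Arguments. Unset Strict Implicit. Unset Printing Implicit Defensive.

(* Both identities hold summand by summand once the sum over S_{n+1} is
   reindexed by composing with a permutation that swaps two adjacent blocks of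
   positions.  Only D a with |a| = 1 survives, and then D a has degree 0, so
   each inner bracket has the degree of its remaining letters.  Swapping the
   blocks {0..j} and {j+1..j+k+1} exchanges the two inner brackets, and graded
   antisymmetry matches the summands of Z_{n,j,k} and Z_{n,k,j}.  For the
   recursion, the graded Jacobi identity splits [U, [V, a]] into [[U, V], a],
   a summand of Z_{n,j,k}, and a multiple of [[U, a], V], which becomes a
   summand of Z_{n,j+1,k} once a is moved into the first bracket.  In both
   cases the signs match because the Koszul sign is a cocycle and the Koszul
   sign of a block swap is (-1)^(product of the block degrees). *)

Section Signs.
Variable K : fieldType.

Lemma sgnzD (x y : int) : sgnz (x + y) = sgnz x * sgnz y :> K.
Proof. by rewrite /sgnz exprzDr // unitrN1. Qed.

Lemma sgnz1 : sgnz 1 = -1 :> K.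
Proof. by rewrite /sgnz expr1z. Qed.

Lemma sgnz_even (z : int) : sgnz (2 * z) = 1 :> K.
Proof. by rewrite /sgnz -exprz_exp (_ : (-1) ^ 2 = 1) ?exp1rz // -exprnP sqrrN expr1n. Qed.

Lemma sgnz_mod2 (x y z : int) : x = y + 2 * z -> sgnz x = sgnz y :> K.
Proof. by move=> ->; rewrite sgnzD sgnz_even mulr1. Qed.

Lemma sgnz_mod2N (x y z : int) : x = y + 1 + 2 * z -> sgnz x = - sgnz y :> K.
Proof. by move=> ->; rewrite !sgnzD sgnz_even sgnz1 mulr1 mulrN1. Qed.

End Signs.

Section LeftNested.
Variables (K : fieldType) (L : lmodType K) (br : L -> L -> L).

Lemma lnest_rcons x s y : lnest br x (rcons s y) = br (lnest br x s) y.
Proof. exact: foldl_rcons. Qed.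

Hypothesis br_linl : forall (c : K) x y z, br (c *: x + y) z = c *: br x z + br y z.

Lemma br0x z : br 0 z = 0.
Proof.
have := br_linl 1 0 0 z; rewrite !scale1r addr0 => /eqP.
by rewrite -subr_eq subrr eq_sym => /eqP.
Qed.

Lemma lnest_linear s (c : K) x y :
  lnest br (c *: x + y) s = c *: lnest br x s + lnest br y s.
Proof. by elim: s x y => [//|t s IH] x y /=; rewrite br_linl IH. Qed.

Lemma lnest0 s : lnest br 0 s = 0.
Proof. by elim: s => [//|t s IH]; rewrite /= br0x. Qed.

Lemma lnestZ s (c : K) x : lnest br (c *: x) s = c *: lnest br x s.
Proof. by rewrite -[c *: x]addr0 lnest_linear lnest0 addr0. Qed.

End LeftNested.

Lemma sum_neq_pairs N (h : 'I_N -> 'I_N -> int) : (forall i j, h i j = h j i) ->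
  \sum_(i : 'I_N) \sum_(j : 'I_N | i != j) h i j =
  2 * \sum_(i : 'I_N) \sum_(j : 'I_N | (i < j)%N) h i j.
Proof.
move=> hC; have split_neq i : \sum_(j : 'I_N | i != j) h i j =
    \sum_(j : 'I_N | (i < j)%N) h i j + \sum_(j : 'I_N | (j < i)%N) h i j.
  rewrite (bigID (fun j : 'I_N => (i < j)%N)) /=.
  by congr (_ + _); apply: eq_bigl => j; rewrite neq_ltn; case: ltngtP.
rewrite (eq_bigr _ (fun i _ => split_neq i)) big_split /= mulr2n.
rewrite mulrDl mul1r; congr (_ + _).
rewrite (exchange_big_dep predT) //=; apply: eq_bigr => i _.
by apply: eq_bigr => j _; rewrite hC.
Qed.

Lemma sum_lt_pairs_perm N (h : 'I_N -> 'I_N -> int) (s : 'S_N) :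
  (forall i j, h i j = h j i) ->
  \sum_(i : 'I_N) \sum_(j : 'I_N | (i < j)%N) h (s i) (s j) =
  \sum_(i : 'I_N) \sum_(j : 'I_N | (i < j)%N) h i j.
Proof.
move=> hC; apply: (@mulfI _ 2) => //.
rewrite -sum_neq_pairs; last by move=> i j; exact: hC.
rewrite -sum_neq_pairs // [RHS](reindex_inj (@perm_inj _ s)); apply: eq_bigr => i _.
by rewrite [RHS](reindex_inj (@perm_inj _ s)); apply: eq_bigl => j; rewrite (inj_eq perm_inj).
Qed.

Lemma koszul_expE n (e : 'I_n.+1 -> int) (pi : 'S_n.+1) :
  koszul_exp e pi =
  \sum_(i : 'I_n.+1) \sum_(j : 'I_n.+1 | (i < j)%N) e (pi i) * e (pi j) * (pi j < pi i)%N%:R.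
Proof.
apply: eq_bigr => i _; rewrite big_mkcondr; apply: eq_bigr => j _.
by case: (pi j < pi i)%N; rewrite ?mulr1 ?mulr0.
Qed.

Lemma addb_natr (b c : bool) : (b (+) c)%:R = b%:R + c%:R - 2 * (b && c)%:R :> int.
Proof. by case: b; case: c. Qed.

Lemma koszul_expM n (d : 'I_n.+1 -> int) (s p : 'S_n.+1) :
  exists c : int, koszul_exp d (s * p) = koszul_exp (d \o p) s + koszul_exp d p - 2 * c.
Proof.
pose flip (x y : 'I_n.+1) := (x < y)%N != (p x < p y)%N.
have ltn_swap (x y : 'I_n.+1) : x != y -> (y < x)%N = ~~ (x < y)%N.
  by rewrite neq_ltn; case: ltngtP.
have flipC x y : flip x y = flip y x.
  case: (eqVneq x y) => [->//|nxy]; have npxy : p x != p y by rewrite (inj_eq perm_inj).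
  by rewrite /flip (ltn_swap _ _ nxy) (ltn_swap _ _ npxy); do 2!case: (_ < _)%N.
pose w i j := d (p (s i)) * d (p (s j)).
have koszul_p : koszul_exp d p =
    \sum_(i : 'I_n.+1) \sum_(j : 'I_n.+1 | (i < j)%N) w i j * (flip (s i) (s j))%:R.
  pose h x y := d (p x) * d (p y) * (flip x y)%:R.
  rewrite (sum_lt_pairs_perm (h := h)); last by move=> x y; rewrite /h flipC [d (p x) * _]mulrC.
  rewrite koszul_expE; apply: eq_bigr => i _; apply: eq_bigr => j ij.
  have npij : p i != p j by rewrite (inj_eq perm_inj) neq_ltn ij.
  by rewrite /h /flip ij (ltn_swap _ _ npij).
exists (\sum_(i : 'I_n.+1) \sum_(j : 'I_n.+1 | (i < j)%N)
          w i j * ((s j < s i)%N && flip (s i) (s j))%:R).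
rewrite koszul_p !koszul_expE mulr_sumr -big_split -sumrB; apply: eq_bigr => i _.
rewrite mulr_sumr -big_split -sumrB; apply: eq_bigr => j ij /=.
have nsij : s i != s j by rewrite (inj_eq perm_inj) neq_ltn ij.
rewrite !permM; have -> : (p (s j) < p (s i))%N = (s j < s i)%N (+) flip (s i) (s j).
  have npsij : p (s i) != p (s j) by rewrite (inj_eq perm_inj).
  by rewrite /flip (ltn_swap _ _ nsij) (ltn_swap _ _ npsij); do 2!case: (_ < _)%N.
rewrite addb_natr /w /=; ring.
Qed.

Lemma sgnz_koszulM (K : fieldType) n (d : 'I_n.+1 -> int) (s p : 'S_n.+1) :
  sgnz (koszul_exp d (s * p)) = sgnz (koszul_exp (d \o p) s + koszul_exp d p) :> K.
Proof. by have [c ->] := koszul_expM d s p; apply: (@sgnz_mod2 K _ _ (- c)); ring. Qed.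

Lemma iotaSr m n : iota m n.+1 = rcons (iota m n) (m + n)%N.
Proof. by rewrite -addn1 iotaD cats1. Qed.

Lemma map_iota_shift (f : nat -> nat) st st' len :
  (forall i, (i < len)%N -> f (st + i)%N = (st' + i)%N) ->
  map f (iota st len) = iota st' len.
Proof.
have iota0 k : iota k len = map (addn k) (iota 0 len) by rewrite -iotaDl addn0.
move=> f_shift; rewrite iota0 [RHS]iota0 -map_comp.
by apply/eq_in_map => i; rewrite mem_iota => /= /f_shift.
Qed.

Lemma sum_ord_iota n (F : 'I_n.+1 -> int) st len : (st + len <= n.+1)%N ->
  \sum_(i : 'I_n.+1 | (st <= i < st + len)%N) F i = \sum_(q <- iota st len) F (inord q).
Proof.
move=> h; rewrite [LHS](eq_bigr (fun i : 'I_n.+1 => F (inord i))) => [|i _]; last first.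
  by rewrite inord_val.
rewrite -(big_mkord (fun i => (st <= i < st + len)%N) (fun q => F (inord q))).
have -> : iota st len = index_iota st (st + len) by rewrite /index_iota addKn.
rewrite (big_nat_widen _ _ _ _ _ h) (big_nat_widenl _ 0 _ _ _ (leq0n st)).
by apply: eq_bigl => i; rewrite andbC.
Qed.

Section BlockSwap.
Variables s m l : nat.

Definition blockswap (p : nat) : nat :=
  if (s <= p < s + m)%N then (p + l)%N
  else if (s + m <= p < s + m + l)%N then (p - m)%N else p.

Lemma blockswap_lt N p : (s + m + l <= N)%N -> (p < N)%N -> (blockswap p < N)%N.
Proof. by rewrite /blockswap; do 2?case: ifP; lia. Qed.

Lemma blockswap_inj : injective blockswap.
Proof. by move=> p q; rewrite /blockswap; do 4?case: ifP; lia. Qed.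

Lemma blockswap_inversion p q :
  ((p < q)%N && (blockswap q < blockswap p)%N) =
  (s <= p < s + m)%N && (s + m <= q < s + m + l)%N.
Proof. by rewrite /blockswap; do 4?case: ifP; lia. Qed.

Lemma map_blockswap_first st len : (s <= st)%N -> (st + len <= s + m)%N ->
  map blockswap (iota st len) = iota (st + l) len.
Proof. by move=> *; apply: map_iota_shift => i *; rewrite /blockswap; case: ifP; lia. Qed.

Lemma map_blockswap_second st len : (s + m <= st)%N -> (st + len <= s + m + l)%N ->
  map blockswap (iota st len) = iota (st - m) len.
Proof. by move=> *; apply: map_iota_shift => i *; rewrite /blockswap; do 2?case: ifP; lia. Qed.

Lemma map_blockswap_id st len : (st + len <= s)%N \/ (s + m + l <= st)%N ->
  map blockswap (iota st len) = iota st len.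
Proof. by move=> *; apply: map_iota_shift => i *; rewrite /blockswap; do 2?case: ifP; lia. Qed.

Definition bswap_fun n (x : 'I_n.+1) : 'I_n.+1 :=
  inord (if (s + m + l <= n.+1)%N then blockswap x else x).

Lemma bswap_fun_inj n : injective (@bswap_fun n).
Proof.
move=> x y /(congr1 val); rewrite /bswap_fun; case: ifP => h /=.
  by rewrite !inordK ?blockswap_lt // => /blockswap_inj/val_inj.
by rewrite !inordK // => /val_inj.
Qed.

(* Outside its range of definition the block swap degenerates to the identity. *)
Definition bswap n : 'S_n.+1 := perm (@bswap_fun_inj n).

Lemma bswapE n (x : 'I_n.+1) : (s + m + l <= n.+1)%N -> bswap n x = blockswap x :> nat.
Proof. by move=> h; rewrite permE /bswap_fun h inordK ?blockswap_lt. Qed.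

(* Only pairs from the first block against the second one are inverted. *)
Lemma koszul_bswap n (e : 'I_n.+1 -> int) : (s + m + l <= n.+1)%N ->
  koszul_exp e (bswap n) =
  (\sum_(q <- iota s m) e (bswap n (inord q))) *
  (\sum_(q <- iota (s + m) l) e (bswap n (inord q))).
Proof.
move=> h; rewrite -!(sum_ord_iota (fun i => e (bswap n i))) //; last by lia.
rewrite big_distrlr /= [RHS]big_mkcond; apply: eq_bigr => i _.
case: ifP => i_first; last first.
  by rewrite big_pred0 // => j; rewrite !bswapE // blockswap_inversion i_first.
by apply: eq_bigl => j; rewrite !bswapE // blockswap_inversion i_first.
Qed.

End BlockSwap.

Section DGLA.
Variables (K : fieldType) (L : lmodType K) (Lg : int -> {pred L}).
Variables (br : L -> L -> L) (delta : L -> L).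

Definition homog (e : L * int) : bool := e.1 \in Lg e.2.

Definition deg (xs : seq (L * int)) : int := \sum_(e <- xs) e.2.

Definition nest (x : L * int) (xs : seq (L * int)) : L :=
  lnest br (Dop delta x.1 x.2) (map fst xs).

(* A summand of Z_{n,j,k}: the letters are split into the groups [x :: xs],
   [y :: ys] and [zs], and [kap] is the Koszul sign exponent. *)
Definition zterm (kap : int) x xs y ys (zs : seq (L * int)) : L :=
  sgnz (kap + deg xs) *: lnest br (br (nest x xs) (nest y ys)) (map fst zs).

Lemma deg_cons e xs : deg (e :: xs) = e.2 + deg xs.
Proof. exact: big_cons. Qed.

Lemma deg_rcons xs e : deg (rcons xs e) = deg xs + e.2.
Proof. by rewrite /deg -cats1 big_cat big_seq1. Qed.

Lemma nest_rcons x xs e : nest x (rcons xs e) = br (nest x xs) e.1.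
Proof. by rewrite /nest map_rcons lnest_rcons. Qed.

Lemma zterm_sgnz kap kap' x xs y ys zs : sgnz kap = sgnz kap' :> K ->
  zterm kap x xs y ys zs = zterm kap' x xs y ys zs.
Proof. by move=> e; rewrite /zterm !sgnzD e. Qed.

Hypothesis HL : is_dgla Lg br delta.

Lemma dgla_brDl (c : K) x y z : br (c *: x + y) z = c *: br x z + br y z.
Proof. by case: HL => _ [_ [_ [_ [-> _]]]]. Qed.

Lemma dgla_brDr (c : K) x y z : br z (c *: x + y) = c *: br z x + br z y.
Proof. by case: HL => _ [_ [_ [_ [_ [-> _]]]]]. Qed.

Lemma dgla_br_homog i j x y : x \in Lg i -> y \in Lg j -> br x y \in Lg (i + j).
Proof. by case: HL => _ [_ [_ [_ [_ [_ [hdeg _]]]]]]; exact: hdeg. Qed.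

Lemma dgla_brC i j x y : x \in Lg i -> y \in Lg j -> br x y = - (sgnz (i * j) *: br y x).
Proof. by case: HL => _ [_ [_ [_ [_ [_ [_ [hC _]]]]]]]; exact: hC. Qed.

Lemma dgla_jacobi i j x y z : x \in Lg i -> y \in Lg j ->
  br x (br y z) = br (br x y) z + sgnz (i * j) *: br y (br x z).
Proof. by case: HL => _ [_ [_ [_ [_ [_ [_ [_ [hJ _]]]]]]]]; exact: hJ. Qed.

Lemma dgla_delta_homog i x : x \in Lg i -> delta x \in Lg (i - 1).
Proof. by case: HL => _ [_ [_ [_ [_ [_ [_ [_ [_ [_ [hdeg _]]]]]]]]]]; exact: hdeg. Qed.

Lemma dgla_br0x z : br 0 z = 0.
Proof. exact: br0x dgla_brDl z. Qed.

Lemma dgla_brx0 z : br z 0 = 0.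
Proof. exact: (br0x (br := fun x y => br y x)) dgla_brDr z. Qed.

Lemma lnest_homog xs x i : x \in Lg i -> all homog xs ->
  lnest br x (map fst xs) \in Lg (i + deg xs).
Proof.
elim: xs x i => [|e xs IH] x i xi /=; first by rewrite /deg big_nil addr0.
by case/andP=> he hxs; rewrite deg_cons addrA; apply: IH hxs; exact: dgla_br_homog.
Qed.

Lemma nest_eq0 x xs : x.2 != 1 -> nest x xs = 0.
Proof. by move=> x1; rewrite /nest /Dop (negbTE x1) (lnest0 dgla_brDl). Qed.

Lemma nest_homog x xs : homog x -> x.2 = 1 -> all homog xs -> nest x xs \in Lg (deg xs).
Proof.
move=> hx x1 hxs; rewrite /nest /Dop x1 eqxx -[deg xs]add0r.
by apply: lnest_homog hxs; rewrite -(subrr 1) -{1}x1; exact: dgla_delta_homog.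
Qed.

Lemma zterm_swap kap x xs y ys zs :
  homog x -> homog y -> all homog xs -> all homog ys ->
  zterm kap x xs y ys zs = zterm (kap + (x.2 + deg xs) * (y.2 + deg ys)) y ys x xs zs.
Proof.
move=> hx hy hxs hys; rewrite /zterm.
have [x1|x1] := eqVneq x.2 1; last first.
  by rewrite !(nest_eq0 _ x1) dgla_br0x dgla_brx0 !(lnest0 dgla_brDl) !scaler0.
have [y1|y1] := eqVneq y.2 1; last first.
  by rewrite !(nest_eq0 _ y1) dgla_br0x dgla_brx0 !(lnest0 dgla_brDl) !scaler0.
rewrite (dgla_brC (nest_homog hx x1 hxs) (nest_homog hy y1 hys)).
rewrite -scaleNr (lnestZ dgla_brDl) scalerA x1 y1; congr (_ *: _).
rewrite [RHS](@sgnz_mod2N K _ (kap + deg xs + deg xs * deg ys) (deg ys)); last by ring.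
by rewrite !sgnzD mulrN.
Qed.

Lemma zterm_shift kap x xs y ys z zs :
  homog x -> homog y -> homog z -> all homog xs -> all homog ys ->
  zterm kap x xs y (rcons ys z) zs =
  zterm kap x xs y ys (z :: zs) - zterm (kap + z.2 * (y.2 + deg ys)) x (rcons xs z) y ys zs.
Proof.
move=> hx hy hz hxs hys; rewrite /zterm !nest_rcons.
have [x1|x1] := eqVneq x.2 1; last first.
  by rewrite !(nest_eq0 _ x1) /= !dgla_br0x !(lnest0 dgla_brDl) !scaler0 subr0.
have [y1|y1] := eqVneq y.2 1; last first.
  by rewrite !(nest_eq0 _ y1) /= !(dgla_br0x, dgla_brx0) !(lnest0 dgla_brDl) !scaler0 subr0.
have hU := nest_homog hx x1 hxs; have hV := nest_homog hy y1 hys.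
rewrite (dgla_jacobi _ hU hV) (dgla_brC hV (dgla_br_homog hU hz)).
rewrite -scaleNr scalerA [X in lnest br X]addrC (lnest_linear dgla_brDl) scalerDr scalerA.
rewrite addrC; congr (_ + _); rewrite -scaleNr deg_rcons y1; congr (_ *: _).
rewrite (@sgnz_mod2 K (kap + z.2 * (1 + deg ys) + (deg xs + z.2))
  (kap + deg xs + deg xs * deg ys + deg ys * (deg xs + z.2)) (z.2 - deg xs * deg ys)).
  by rewrite !sgnzD; ring.
by ring.
Qed.

Section Summands.
Variables (n : nat) (a : 'I_n.+1 -> L) (d : 'I_n.+1 -> int).
Hypothesis Ha : forall i, a i \in Lg (d i).

Definition entry (pi : 'S_n.+1) (p : nat) : L * int := (a (pi (inord p)), d (pi (inord p))).

Definition zsummand (pi : 'S_n.+1) (j k : nat) : L :=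
  let c := entry pi in
  zterm (koszul_exp d pi) (c 0%N) (map c (iota 1 j)) (c j.+1) (map c (iota j.+2 k))
    (map c (iota (j + k).+2 (n - (j + k).+1))).

Lemma Zjk_zsummand j k : Zjk br delta a d j k = \sum_(pi : 'S_n.+1) zsummand pi j k.
Proof.
apply: eq_bigr => pi _; rewrite /zsummand /zterm /nest /deg /= big_map.
by rewrite -!map_comp /index_iota subSS subn0.
Qed.

Lemma entry_homog pi p : homog (entry pi p).
Proof. exact: Ha. Qed.

Lemma all_entry_homog pi s : all homog (map (entry pi) s).
Proof. by rewrite all_map; apply/allP => p _; exact: entry_homog. Qed.

Section EntryBlockSwap.
Variables (s m l : nat) (pi : 'S_n.+1).
Hypothesis swap_range : (s + m + l <= n.+1)%N.

Lemma entry_bswap p : (p < n.+1)%N ->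
  entry (bswap s m l n * pi) p = entry pi (blockswap s m l p).
Proof.
move=> pn; rewrite /entry !permM.
suff -> : bswap s m l n (inord p) = inord (blockswap s m l p) by [].
by apply/val_inj; rewrite /= bswapE // !inordK // blockswap_lt.
Qed.

Lemma map_entry_bswap st len : (st + len <= n.+1)%N ->
  map (entry (bswap s m l n * pi)) (iota st len) =
  map (entry pi) (map (blockswap s m l) (iota st len)).
Proof.
move=> h; rewrite -map_comp; apply/eq_in_map => p; rewrite mem_iota => hp.
by rewrite entry_bswap //; lia.
Qed.

Lemma sgnz_koszul_bswap :
  sgnz (koszul_exp d (bswap s m l n * pi)) =
  sgnz (koszul_exp d pi + deg (map (entry pi) (map (blockswap s m l) (iota s m))) *
                          deg (map (entry pi) (map (blockswap s m l) (iota (s + m) l)))) :> K.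
Proof.
rewrite sgnz_koszulM addrC koszul_bswap // -!map_entry_bswap ?addnA //; try lia.
by rewrite /deg !big_map; congr (sgnz (_ + _ * _)); apply: eq_bigr => q _; rewrite /entry permM.
Qed.

End EntryBlockSwap.

Lemma zsummand_swap pi j k : (j + k < n)%N ->
  zsummand pi j k = zsummand (bswap 0 k.+1 j.+1 n * pi) k j.
Proof.
move=> jkn; have range : (0 + k.+1 + j.+1 <= n.+1)%N by lia.
rewrite /zsummand (zterm_sgnz _ _ _ _ _ (sgnz_koszul_bswap pi range)).
rewrite !entry_bswap ?map_entry_bswap; try lia.
rewrite (@map_blockswap_first _ _ _ 0) ?(@map_blockswap_first _ _ _ 1) //; try lia.
rewrite (@map_blockswap_second _ _ _ k.+1) ?(@map_blockswap_second _ _ _ k.+2) //; try lia.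
rewrite map_blockswap_id; last by right; lia.
have -> : blockswap 0 k.+1 j.+1 0 = j.+1 by [].
have -> : blockswap 0 k.+1 j.+1 k.+1 = 0%N by rewrite /blockswap; do 2?case: ifP; lia.
rewrite zterm_swap ?entry_homog ?all_entry_homog // subSnn subnn (addnC k).
by congr zterm; rewrite /= !deg_cons mulrC.
Qed.

(* [bswap j.+1 1 k.+1] moves the last letter of the second bracket of a
   summand of Z_{n,j,k+1} to the end of the first one. *)
Lemma zsummand_shift pi j k : (j + k + 1 < n)%N ->
  zsummand pi j k.+1 = zsummand pi j k - zsummand (bswap j.+1 1 k.+1 n * pi) j.+1 k.
Proof.
move=> jkn; have range : (j.+1 + 1 + k.+1 <= n.+1)%N by lia.
rewrite [in RHS]/zsummand (zterm_sgnz _ _ _ _ _ (sgnz_koszul_bswap pi range)).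
rewrite !entry_bswap ?map_entry_bswap; try lia.
rewrite (@map_blockswap_first _ _ _ j.+1) ?(@map_blockswap_second _ _ _ (j.+1 + 1)) //; try lia.
rewrite (@map_blockswap_second _ _ _ j.+3) //; try lia.
rewrite (@map_blockswap_id _ _ _ (j.+1 + k).+2); last by right; lia.
rewrite [iota 1 j.+1]iotaSr map_rcons map_blockswap_id; last by left; lia.
have -> : blockswap j.+1 1 k.+1 0 = 0%N by [].
have -> : blockswap j.+1 1 k.+1 j.+2 = j.+1 by rewrite /blockswap; do 2?case: ifP; lia.
have -> : blockswap j.+1 1 k.+1 (1 + j) = (j + k).+2 by rewrite /blockswap; case: ifP; lia.
have -> : (n - (j + k).+1 = (n - (j + k).+2).+1)%N by lia.
rewrite /zsummand addnS iotaSr map_rcons zterm_shift ?entry_homog ?all_entry_homog //.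
rewrite !addSn !subn1 addn1 /= map_rcons; congr (_ - zterm _ _ _ _ _ _).
by rewrite !deg_cons /deg big_nil addr0 addnS mulrC.
Qed.

End Summands.

End DGLA.

Unset Implicit Arguments.

Theorem lemma2 (K : fieldType) (L : lmodType K)
  (Lg : int -> {pred L}) (br : L -> L -> L) (delta : L -> L)
  (HL : is_dgla Lg br delta)
  (n : nat) (a : 'I_n.+1 -> L) (d : 'I_n.+1 -> int)
  (Ha : forall i, a i \in Lg (d i)) :
  (forall j k : nat, (j + k < n)%N ->
     Zjk br delta a d j k = Zjk br delta a d k j) /\
  (forall j k : nat, (j + k + 1 < n)%N ->
     Zjk br delta a d j k = Zjk br delta a d j.+1 k + Zjk br delta a d j k.+1).
Proof.
split=> j k jkn; rewrite !Zjk_zsummand.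
  rewrite [RHS](reindex_inj (mulgI (bswap 0 k.+1 j.+1 n))).
  apply: eq_bigr => pi _; exact: (zsummand_swap HL Ha pi jkn).
have shift pi := zsummand_shift HL Ha pi jkn.
rewrite (eq_bigr _ (fun pi _ => shift pi)) sumrB.
by rewrite [X in X + _](reindex_inj (mulgI (bswap j.+1 1 k.+1 n))) addrC subrK.
Qed.
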